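(* For all integers $0\le t\le n$, there exists a $2$-CNF formula $F$ on $n$ variables that is acyclic, $t$-admissible, and satisfies $|\mathrm{sat}_t(F)|=S(n,t,2)$.
   Context: A $2$-CNF formula over $x_1,\dots,x_n$ is a conjunction of clauses each containing at most two literals. The implication graph $G(F)$ of a $2$-CNF $F$ is the directed graph on the $2n$ literals $x_1,\dots,x_n,\neg x_1,\dots,\neg x_n$ which, for each clause $X\lor Y$ ($X,Y$ literals), contains the edges $\neg X\to Y$ and $\neg Y\to X$ (a unit clause $X$ is treated as $X\lor X$). $F$ is acyclic if $G(F)$ has no directed cycle. $\mathrm{sat}_t(F)$ is the set of satisfying assignments of Hamming weight exactly $t$; $F$ is $t$-admissible if it has no satisfying assignment of Hamming weight less than $t$; $S(n,t,k)$ is the maximum of $|\mathrm{sat}_t(F)|$ over $t$-admissible $k$-CNF formulas $F$ on $n$ variables. *)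

From mathcomp Require Import all_boot.
Set Implicit Arguments. Unset Strict Implicit. Unset Printing Implicit Defensive.

(* A literal over variables x_1..x_n (indexed by 'I_n): (i, true) is x_i,
   (i, false) is the negation of x_i. *)
Definition lit (n : nat) : finType := ('I_n * bool)%type.
Definition negl n (l : lit n) : lit n := (l.1, ~~ l.2).

Definition clause (n : nat) := {set lit n}.
Definition cnf (n : nat) := {set clause n}.

Definition is_kcnf n (k : nat) (F : cnf n) : bool := [forall c in F, #|c| <= k].

Definition assignment (n : nat) := {ffun 'I_n -> bool}.
Definition weight n (a : assignment n) : nat := #|[set i | a i]|.

Definition sat_lit n (a : assignment n) (l : lit n) : bool := a l.1 == l.2.
Definition sat_clause n (a : assignment n) (c : clause n) : bool :=
  [exists l in c, sat_lit a l].
Definition sat_cnf n (a : assignment n) (F : cnf n) : bool :=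
  [forall c in F, sat_clause a c].

Definition sat_t n (t : nat) (F : cnf n) : {set assignment n} :=
  [set a | sat_cnf a F & weight a == t].

Definition admissible n (t : nat) (F : cnf n) : bool :=
  [forall a : assignment n, sat_cnf a F ==> (t <= weight a)].

Definition S (n t k : nat) : nat :=
  \max_(F : cnf n | is_kcnf k F && admissible t F) #|sat_t t F|.

(* Implication graph of a 2-CNF: clause {X, Y} (X <> Y) gives edges
   ~X -> Y and ~Y -> X; a unit clause {X} (= X \/ X) gives the edge ~X -> X. *)
Definition impl_edge n (F : cnf n) : rel (lit n) :=
  fun u v => [exists c in F,
    [&& negl u \in c, v \in c & (negl u != v) || (#|c| == 1)]].

Definition acyclic n (F : cnf n) : bool :=
  [forall u : lit n, forall v : lit n,
     ~~ (impl_edge F u v && connect (impl_edge F) v u)].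

(* Take a t-admissible 2-CNF F attaining S(n,t,2) and replace it by the set M of all
   positive clauses of size at most 2 that F implies.  M is monotone, so every edge of
   its implication graph goes from a negative to a positive literal and M is acyclic;
   every solution of F solves M, so |sat_t(M)| >= S(n,t,2).  M stays t-admissible:
   if a solves M, then any two zeros of a are zeros of a common solution of F (else
   the positive clause on them would be in M), and since the solutions of a 2-CNF are
   closed under the coordinatewise median, Helly's property for median-closed sets
   yields a solution of F vanishing on all zeros of a, hence of weight <= weight a. *)

From mathcomp Require Import all_boot.

Set Implicit Arguments. Unset Strict Implicit. Unset Printing Implicit Defensive.

Definition median n (b1 b2 b3 : assignment n) : assignment n :=
  [ffun i => [|| b1 i && b2 i, b1 i && b3 i | b2 i && b3 i]].

Lemma sat_lit_median n (b1 b2 b3 : assignment n) (l : lit n) :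
  sat_lit (median b1 b2 b3) l =
  [|| sat_lit b1 l && sat_lit b2 l, sat_lit b1 l && sat_lit b3 l
    | sat_lit b2 l && sat_lit b3 l].
Proof.
by rewrite /sat_lit ffunE; case: l.2; case: (b1 _); case: (b2 _); case: (b3 _).
Qed.

Lemma card_le2_mem3 (T : finType) (A : {set T}) (x y z : T) :
  #|A| <= 2 -> x \in A -> y \in A -> z \in A -> [|| x == y, x == z | y == z].
Proof.
move=> hA hx hy hz; have [//|/= neq_xy] := eqVneq x y.
have eq_A : A = [set x; y].
  apply/esym/eqP; rewrite eqEcard cards2 neq_xy hA andbT.
  by apply/subsetP=> w; rewrite !inE => /orP [] /eqP ->.
by move: hz; rewrite eq_A !inE => /orP [] /eqP ->; rewrite eqxx ?orbT.
Qed.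

Lemma sat_clause_median n (c : clause n) (b1 b2 b3 : assignment n) :
  #|c| <= 2 -> sat_clause b1 c -> sat_clause b2 c -> sat_clause b3 c ->
  sat_clause (median b1 b2 b3) c.
Proof.
move=> hc /existsP [l1 /andP [c1 s1]] /existsP [l2 /andP [c2 s2]]
  /existsP [l3 /andP [c3 s3]].
case/or3P: (card_le2_mem3 hc c1 c2 c3) => /eqP eq_l; subst.
- by apply/existsP; exists l2; rewrite c2 sat_lit_median s1 s2.
- by apply/existsP; exists l3; rewrite c3 sat_lit_median s1 s3 orbT.
- by apply/existsP; exists l3; rewrite c3 sat_lit_median s2 s3 !orbT.
Qed.

Lemma sat_cnf_median n (F : cnf n) (b1 b2 b3 : assignment n) : is_kcnf 2 F ->
  sat_cnf b1 F -> sat_cnf b2 F -> sat_cnf b3 F -> sat_cnf (median b1 b2 b3) F.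
Proof.
move=> /forall_inP hF /forall_inP h1 /forall_inP h2 /forall_inP h3.
by apply/forall_inP => c Fc; apply: sat_clause_median; auto.
Qed.

Section TwoCnfHelly.

Variables (n : nat) (F : cnf n) (L : seq (lit n)).
Hypothesis F2 : is_kcnf 2 F.
Hypothesis L_pairwise : forall l1 l2, l1 \in L -> l2 \in L ->
  exists b, [&& sat_cnf b F, sat_lit b l1 & sat_lit b l2].

(* The median of witnesses for {l1, l2}, {x, l2} and {l1, x}, each also
   satisfying s, satisfies l1, l2, x and all of s. *)
Lemma sat_cnf_lits_pair_subseq (s : seq (lit n)) : {subset s <= L} ->
  forall l1 l2, l1 \in L -> l2 \in L ->
  exists b, [&& sat_cnf b F, sat_lit b l1, sat_lit b l2 & all (sat_lit b) s].
Proof.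
elim: s => [_ l1 l2 L1 L2 | x s IH /allP /= /andP [Lx /allP sL] l1 l2 L1 L2].
  by have [b /and3P [Fb b1 b2]] := L_pairwise L1 L2; exists b; rewrite Fb b1 b2.
have [b1 /and4P [b1F b1l1 b1l2 b1s]] := IH sL l1 l2 L1 L2.
have [b2 /and4P [b2F b2x b2l2 b2s]] := IH sL x l2 Lx L2.
have [b3 /and4P [b3F b3l1 b3x b3s]] := IH sL l1 x L1 Lx.
exists (median b1 b2 b3); rewrite sat_cnf_median //= !sat_lit_median.
rewrite b1l1 b1l2 b2x b2l2 b3l1 b3x !orbT /=.
by apply/allP => y sy; rewrite sat_lit_median (allP b1s y sy) (allP b2s y sy).
Qed.

Lemma sat_cnf_lits_pairwise : (exists b, sat_cnf b F) ->
  exists b, sat_cnf b F && all (sat_lit b) L.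
Proof.
move=> [b Fb]; case: L sat_cnf_lits_pair_subseq => [|l L'] helly.
  by exists b; rewrite Fb.
have lL := mem_head l L'.
by have [b' /and4P [Fb' _ _ Lb']] := helly _ (fun _ => id) l l lL lL;
  exists b'; rewrite Fb'.
Qed.

End TwoCnfHelly.

Definition positive_clause n (c : clause n) : bool := [forall l in c, l.2].

Definition implied_clause n (F : cnf n) (c : clause n) : bool :=
  [forall b : assignment n, sat_cnf b F ==> sat_clause b c].

Definition pos2_implicates n (F : cnf n) : cnf n :=
  [set c : clause n | [&& positive_clause c, #|c| <= 2 & implied_clause F c]].

Lemma acyclic_positive n (F : cnf n) :
  (forall c, c \in F -> positive_clause c) -> acyclic F.
Proof.
move=> Fpos.
have edge_sign x y : impl_edge F x y -> ~~ x.2 && y.2.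
  case/existsP=> c /and4P [Fc xc yc _]; have /forall_inP cpos := Fpos c Fc.
  by move: (cpos _ xc) (cpos _ yc) => /=; case: x.2 => // _ ->.
apply/forallP=> u; apply/forallP=> v; apply/negP=> /andP [/edge_sign /andP [u2 v2]].
case/connectP=> [[|w p]] /=; first by move=> _ eq_vu; rewrite eq_vu v2 in u2.
by case/andP=> /edge_sign; rewrite v2.
Qed.

Lemma sat_pos2_implicates n (F : cnf n) (b : assignment n) :
  sat_cnf b F -> sat_cnf b (pos2_implicates F).
Proof.
by move=> Fb; apply/forall_inP => c; rewrite inE => /and3P [_ _ /forallP /(_ b)];
  rewrite Fb.
Qed.

Lemma not_implied_pos2 n (F : cnf n) (a : assignment n) (c : clause n) :
  positive_clause c -> #|c| <= 2 -> sat_cnf a (pos2_implicates F) ->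
  ~~ sat_clause a c -> exists b, sat_cnf b F && ~~ sat_clause b c.
Proof.
move=> cpos c2 /forall_inP /(_ c) Ma ac.
have : ~~ implied_clause F c.
  by apply: contra ac => Fc; apply: Ma; rewrite inE cpos c2.
by rewrite negb_forall => /existsP [b]; rewrite negb_imply; exists b.
Qed.

Lemma pos2_implicates_below n (F : cnf n) (a : assignment n) : is_kcnf 2 F ->
  sat_cnf a (pos2_implicates F) ->
  exists b, sat_cnf b F && [forall i, b i ==> a i].
Proof.
move=> F2 Ma.
have F_sat : exists b, sat_cnf b F.
  have cpos : positive_clause (set0 : clause n) by apply/forall_inP => l; rewrite inE.
  have c2 : #|(set0 : clause n)| <= 2 by rewrite cards0.
  have a0 : ~~ sat_clause a set0 by apply/existsPn => l; rewrite inE.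
  by have [b /andP [Fb _]] := not_implied_pos2 cpos c2 Ma a0; exists b.
pose L := [seq (i, false) | i <- enum [set i | ~~ a i]].
have L_pairwise l1 l2 : l1 \in L -> l2 \in L ->
    exists b, [&& sat_cnf b F, sat_lit b l1 & sat_lit b l2].
  case/mapP=> j; rewrite mem_enum inE => aj ->.
  case/mapP=> k; rewrite mem_enum inE => ak ->.
  have cpos : positive_clause [set (j, true); (k, true)].
    by apply/forall_inP => l; rewrite !inE => /orP [] /eqP ->.
  have c2 : #|[set (j, true); (k, true)]| <= 2 by rewrite cards2; case: (_ != _).
  have ac : ~~ sat_clause a [set (j, true); (k, true)].
    apply/existsPn => l; rewrite !inE /sat_lit; apply/negP.
    by case/andP=> /orP [] /eqP -> /=; rewrite eqb_id ?(negbTE aj) ?(negbTE ak).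
  have [b /andP [Fb /existsPn bc]] := not_implied_pos2 cpos c2 Ma ac.
  exists b; rewrite Fb /sat_lit /=.
  move: (bc (j, true)) (bc (k, true)); rewrite !inE !eqxx /= orbT /sat_lit /=.
  by rewrite !eqb_id !eqbF_neg => -> ->.
have [b /andP [Fb bL]] := sat_cnf_lits_pairwise F2 L_pairwise F_sat.
exists b; rewrite Fb; apply/forallP => i; apply/implyP => bi.
apply/negPn/negP => ai.
have iL : (i, false) \in L by apply/mapP; exists i; rewrite ?mem_enum ?inE.
by move: (allP bL _ iL); rewrite /sat_lit bi.
Qed.

Lemma is_kcnf_pos2_implicates n (F : cnf n) : is_kcnf 2 (pos2_implicates F).
Proof. by apply/forall_inP => c; rewrite inE => /and3P []. Qed.

Lemma acyclic_pos2_implicates n (F : cnf n) : acyclic (pos2_implicates F).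
Proof. by apply: acyclic_positive => c; rewrite inE => /and3P []. Qed.

Lemma weight_le_pointwise n (a b : assignment n) :
  [forall i, b i ==> a i] -> weight b <= weight a.
Proof.
move/forallP=> ba; apply: subset_leq_card; apply/subsetP => i.
by rewrite !inE; apply/implyP.
Qed.

Lemma admissible_pos2_implicates n t (F : cnf n) :
  is_kcnf 2 F -> admissible t F -> admissible t (pos2_implicates F).
Proof.
move=> F2 /forallP Ft; apply/forallP => a; apply/implyP => Ma.
have [b /andP [Fb ba]] := pos2_implicates_below F2 Ma.
exact: leq_trans (implyP (Ft b) Fb) (weight_le_pointwise ba).
Qed.

Lemma sat_t_pos2_implicates n t (F : cnf n) :
  sat_t t F \subset sat_t t (pos2_implicates F).
Proof.
by apply/subsetP => a; rewrite !inE => /andP [Fa ->]; rewrite sat_pos2_implicates.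
Qed.

Lemma leq_S n t k (F : cnf n) :
  is_kcnf k F -> admissible t F -> #|sat_t t F| <= S n t k.
Proof. by move=> Fk Ft; apply: leq_bigmax_cond; rewrite Fk Ft. Qed.

(* The unsatisfiable formula consisting of the empty clause shows that the
   maximum defining S is over a nonempty set. *)
Lemma S_attained n t k :
  exists F : cnf n, [/\ is_kcnf k F, admissible t F & #|sat_t t F| = S n t k].
Proof.
pose A := [pred F : cnf n | is_kcnf k F && admissible t F].
have A_empty_clause : [set set0] \in A.
  rewrite inE; apply/andP; split.
    by apply/forall_inP => c; rewrite inE => /eqP ->; rewrite cards0.
  apply/forallP => a; apply/implyP => /forall_inP /(_ set0).
  by rewrite inE eqxx => /(_ isT) /existsP [l]; rewrite inE.
have [|F AF maxF] := @eq_bigmax_cond _ A (fun F => #|sat_t t F|).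
  by apply/card_gt0P; exists [set set0].
by move: AF; rewrite inE => /andP [Fk Ft]; exists F; split; rewrite // -maxF.
Qed.

(* The argument does not need the bound [t <= n]. *)
Theorem mainTheorem9 (n t : nat) (htn : t <= n) :
  exists F : cnf n,
    [/\ is_kcnf 2 F, acyclic F, admissible t F & #|sat_t t F| = S n t 2].
Proof.
have [F [F2 Ft satF]] := @S_attained n t 2.
have M2 := is_kcnf_pos2_implicates F.
have Mt := admissible_pos2_implicates F2 Ft.
exists (pos2_implicates F); split; rewrite ?acyclic_pos2_implicates //.
apply/eqP; rewrite eqn_leq leq_S //= -satF.
exact: subset_leq_card (sat_t_pos2_implicates t F).
Qed.
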